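(* Let $T_n$ denote the Chebyshev polynomial of degree $n$. For any $0\le\delta<1$ and any sequence $\boldsymbol\lambda=(\lambda_1,\dots,\lambda_d)$ of reals with $-1\le\lambda_i\le1+\delta$, we have $$\gamma_2(\mathcal D_{T_n,\boldsymbol\lambda})\le(2n^2-1)\,T_n(1+\delta)\qquad\text{for all }n\ge1.$$
   Context: The Chebyshev polynomial $T_n$ is defined by $T_n(\cos\theta)=\cos(n\theta)$. For a continuously differentiable $f$ and a sequence $\boldsymbol\lambda=(\lambda_1,\dots,\lambda_d)$, $\mathcal D_{f,\boldsymbol\lambda}$ is the $d\times d$ matrix with entries $(\mathcal D_{f,\boldsymbol\lambda})_{ij}=\frac{f(\lambda_i)-f(\lambda_j)}{\lambda_i-\lambda_j}$ if $\lambda_i\ne\lambda_j$ and $f'(\lambda_i)$ if $\lambda_i=\lambda_j$. For a $d\times d$ matrix $\mathbf M$, $\gamma_2(\mathbf M)=\inf\max\big(\{\|v_i\|^2:1\le i\le d\}\cup\{\|w_j\|^2:1\le j\le d\}\big)$, the infimum over all families of vectors $v_i,w_j$ (in any Hilbert space) with $\mathbf M_{ij}=\langle v_i|w_j\rangle$ for all $i,j$. *)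

From mathcomp Require Import all_boot all_order all_algebra.
From mathcomp Require Import all_classical all_reals.
From mathcomp Require Import trigo.
Set Implicit Arguments. Unset Strict Implicit. Unset Printing Implicit Defensive.
Import Order.TTheory GRing.Theory Num.Theory.
Local Open Scope ring_scope.
Local Open Scope classical_set_scope.

Definition divdiff (R : realType) (f : {poly R}) (d : nat) (lam : 'I_d -> R)
  : 'M[R]_d :=
  \matrix_(i, j) (if lam i != lam j then (f.[lam i] - f.[lam j]) / (lam i - lam j)
                  else f^`().[lam i]).

Definition sqnorm (R : realType) (k : nat) (v : 'rV[R]_k) : R := \sum_(l < k) v 0 l ^+ 2.

Definition gamma2 (R : realType) (d : nat) (M : 'M[R]_d) : R :=
  inf [set c : R | exists (k : nat) (v w : 'I_d -> 'rV[R]_k),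
        (forall i j, M i j = \sum_(l < k) v i 0 l * w j 0 l) /\
        c = Num.max (\big[Num.max/0]_(i < d) sqnorm (v i))
                    (\big[Num.max/0]_(j < d) sqnorm (w j))].

From mathcomp Require Import all_boot all_order all_algebra.
From mathcomp Require Import all_classical all_reals.
From mathcomp Require Import trigo.
From mathcomp Require Import ring lra zify.
Set Implicit Arguments. Unset Strict Implicit. Unset Printing Implicit Defensive.
Import Order.TTheory GRing.Theory Num.Theory.
Local Open Scope ring_scope.

(* With c_0 = 1 and c_k = 2 for k > 0, one has
   T_n(x) - T_n(y) = (x - y) S_n(x, y) where S_n(x, y) = sum_(k < n) c_k U_(n-1-k)(x) T_k(y),
   and S_n(x, x) = T_n'(x).  Hence D_(T_n, lambda) is a sum of n rank-one matrices.
   Balancing the two factors of the k-th one by sqrt(T_k(X) / U_(n-1-k)(X)), X = 1 + delta,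
   and using |T_k| <= T_k(X), |U_k| <= U_k(X) on [-1, X], gives a factorization whose rows
   have squared norms at most S_n(X, X) = T_n'(X) <= n^2 T_n(X).  All the growth facts
   for arguments >= 1 come from one comparison: a solution of
   a_(k+2) = 2 X a_(k+1) - a_k + e_k with e_k >= 0, X >= 1 and 0 <= a_0 <= a_1 is
   nondecreasing. *)

Lemma nat_ind2 (P : nat -> Prop) :
  P 0%N -> P 1%N -> (forall k, P k -> P k.+1 -> P k.+2) -> forall k, P k.
Proof.
move=> P0 P1 PSS k; suff: P k /\ P k.+1 by case.
by elim: k => [|k [Pk Pk1]]; split=> //; apply: PSS.
Qed.

Lemma eq_poly_on_unit_interval (R : numFieldType) (p q : {poly R}) :
  (forall x, 0 <= x <= 1 -> p.[x] = q.[x]) -> p = q.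
Proof.
move=> pq; apply/eqP; rewrite -subr_eq0; apply/negPn/negP => pq_neq0.
pose rs := [seq (i.+1%:R)^-1 : R | i <- iota 0 (size (p - q))].
have rs_roots : all (root (p - q)) rs.
  apply/allP => _ /mapP[i _ ->]; rewrite /root !hornerE pq ?subrr //.
  by rewrite invr_ge0 ler0n invf_le1 ?ltr0Sn // ler1n.
have rs_uniq : uniq rs.
  rewrite map_inj_uniq ?iota_uniq // => i j /invr_inj/eqP.
  by rewrite eqr_nat => /eqP[].
by have := max_poly_roots pq_neq0 rs_roots rs_uniq; rewrite size_map size_iota ltnn.
Qed.

Lemma sqr_le_of_norm_le (R : realDomainType) (x y : R) : `|x| <= y -> x ^+ 2 <= y ^+ 2.
Proof.
move=> xy; rewrite -real_normK ?num_real //; apply: lerXn2r => //.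
by rewrite nnegrE (le_trans _ xy).
Qed.

Section ChebyshevAlgebra.
Variable R : comNzRingType.

Fixpoint cheb_rec (p0 p1 : {poly R}) (k : nat) : {poly R} :=
  match k with
  | 0 => p0
  | k1.+1 => match k1 with
             | 0 => p1
             | k2.+1 => 'X *+ 2 * cheb_rec p0 p1 k1 - cheb_rec p0 p1 k2
             end
  end.

Definition chebT k := cheb_rec 1 'X k.
Definition chebU k := cheb_rec 1 ('X *+ 2) k.

Lemma cheb_recSS p0 p1 k x :
  (cheb_rec p0 p1 k.+2).[x] = 2 * x * (cheb_rec p0 p1 k.+1).[x] - (cheb_rec p0 p1 k).[x].
Proof. by rewrite [cheb_rec _ _ k.+2]/= !hornerE; ring. Qed.

Lemma chebTSS k x : (chebT k.+2).[x] = 2 * x * (chebT k.+1).[x] - (chebT k).[x].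
Proof. exact: cheb_recSS. Qed.

Lemma chebUSS k x : (chebU k.+2).[x] = 2 * x * (chebU k.+1).[x] - (chebU k).[x].
Proof. exact: cheb_recSS. Qed.

Lemma chebT0 x : (chebT 0%N).[x] = 1. Proof. by rewrite /chebT /= hornerE. Qed.
Lemma chebT1 x : (chebT 1%N).[x] = x. Proof. by rewrite /chebT /= hornerE. Qed.
Lemma chebU0 x : (chebU 0%N).[x] = 1. Proof. by rewrite /chebU /= hornerE. Qed.
Lemma chebU1 x : (chebU 1%N).[x] = 2 * x. Proof. by rewrite /chebU /= !hornerE; ring. Qed.

Lemma chebUSS_chebT k x : (chebU k.+2).[x] = (chebU k).[x] + 2 * (chebT k.+2).[x].
Proof.
elim/nat_ind2: k => [|| k IH0 IH1].
- by rewrite !(chebUSS, chebTSS) chebU0 chebU1 ?chebT0 chebT1; ring.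
- by rewrite !(chebUSS, chebTSS) chebU0 chebU1 ?chebT0 chebT1; ring.
- have U1E : 2 * x * (chebU k.+1).[x] = (chebU k.+2).[x] + (chebU k).[x].
    by rewrite chebUSS; ring.
  by rewrite chebUSS chebTSS IH1 mulrDr U1E IH0; ring.
Qed.

Definition cheb_coef (k : nat) : R := if k == 0%N then 1 else 2.

Definition cheb_dd n x y :=
  \sum_(k < n) cheb_coef k * (chebU (n.-1 - k)).[x] * (chebT k).[y].

Lemma cheb_dd0 x y : cheb_dd 0 x y = 0.
Proof. by rewrite /cheb_dd big_ord0. Qed.

Lemma cheb_dd1 x y : cheb_dd 1 x y = 1.
Proof. by rewrite /cheb_dd big_ord1 /cheb_coef /= chebU0 chebT0 !mulr1. Qed.

Lemma cheb_ddSS n x y :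
  cheb_dd n.+2 x y = 2 * x * cheb_dd n.+1 x y - cheb_dd n x y + 2 * (chebT n.+1).[y].
Proof.
have sum_recE : \sum_(k < n) cheb_coef k * (chebU (n.+1 - k)).[x] * (chebT k).[y] =
    2 * x * \sum_(k < n) cheb_coef k * (chebU (n - k)).[x] * (chebT k).[y] - cheb_dd n x y.
  rewrite mulr_sumr -sumrB; apply: eq_bigr => k _.
  have [-> ->] : (n.+1 - k = (n.-1 - k).+2 /\ n - k = (n.-1 - k).+1)%N.
    by have := ltn_ord k; lia.
  by rewrite chebUSS; ring.
rewrite /cheb_dd [in LHS]big_ord_recr [in LHS]big_ord_recr [in X in 2 * x * X]big_ord_recr /=.
rewrite sum_recE subSnn !subnn chebU1 chebU0 /cheb_dd [cheb_coef n.+1]/cheb_coef /=; ring.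
Qed.

Lemma cheb_ddE n x y : (x - y) * cheb_dd n x y = (chebT n).[x] - (chebT n).[y].
Proof.
elim/nat_ind2: n => [|| n IH0 IH1].
- by rewrite cheb_dd0 !chebT0; ring.
- by rewrite cheb_dd1 !chebT1; ring.
- transitivity (2 * x * ((x - y) * cheb_dd n.+1 x y) - (x - y) * cheb_dd n x y
                + 2 * (x - y) * (chebT n.+1).[y]).
    by rewrite cheb_ddSS; ring.
  by rewrite IH0 IH1 !chebTSS; ring.
Qed.

Lemma deriv_chebT n x : ((chebT n)^`()).[x] = cheb_dd n x x.
Proof.
elim/nat_ind2: n => [|| n IH0 IH1].
- by rewrite cheb_dd0 /chebT /= derivC hornerE.
- by rewrite cheb_dd1 /chebT /= derivX hornerE.
have -> : chebT n.+2 = 'X *+ 2 * chebT n.+1 - chebT n by [].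
by rewrite derivB derivM derivMn derivX !hornerE IH0 IH1 cheb_ddSS; ring.
Qed.

End ChebyshevAlgebra.

Arguments chebT {R} k.
Arguments chebU {R} k.
Arguments cheb_coef {R} k.
Arguments cheb_dd {R} n x y.

Section ChebyshevGrowth.
Variable R : realDomainType.
Implicit Types (X x y : R) (k n : nat).

Lemma cheb_coef_gt0 k : 0 < cheb_coef k :> R.
Proof. by rewrite /cheb_coef; case: (k == 0%N); rewrite ?ltr01 ?ltr0n. Qed.

Lemma recurrence_nondecreasing X (a e : nat -> R) :
  1 <= X -> (forall k, 0 <= e k) ->
  (forall k, a k.+2 = 2 * X * a k.+1 - a k + e k) ->
  0 <= a 0%N <= a 1%N -> forall k, a 0%N <= a k <= a k.+1.
Proof.
move=> X_ge1 e_ge0 aSS /andP[a0_ge0 a01]; elim=> [|k /andP[a0k akS]].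
  by rewrite lexx.
have : 0 <= (2 * X - 2) * a k.+1 by apply: mulr_ge0; lra.
by have := e_ge0 k; rewrite aSS; lra.
Qed.

Lemma chebT_ge1_leS X k : 1 <= X -> 1 <= (chebT k).[X] <= (chebT k.+1).[X].
Proof.
move=> X_ge1; rewrite -[L in L <= _](chebT0 X).
apply: (recurrence_nondecreasing (a := fun j => (chebT j).[X]) (e := fun=> 0) X_ge1) => // [j|].
  by rewrite chebTSS addr0.
by rewrite chebT0 chebT1 ler01.
Qed.

Lemma chebU_ge1 X k : 1 <= X -> 1 <= (chebU k).[X].
Proof.
move=> X_ge1; rewrite -(chebU0 X).
suff /(_ k)/andP[] : forall j, (chebU 0).[X] <= (chebU j).[X] <= (chebU j.+1).[X] by [].
apply: (recurrence_nondecreasing (a := fun j => (chebU j).[X]) (e := fun=> 0) X_ge1) => //.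
  by move=> j; rewrite chebUSS addr0.
by rewrite chebU0 chebU1; lra.
Qed.

Lemma chebT_le x y k : 1 <= x <= y -> (chebT k).[x] <= (chebT k).[y].
Proof.
move=> /andP[x_ge1 xy]; rewrite -subr_ge0.
pose a j := (chebT j).[y] - (chebT j).[x].
suff /(_ k)/andP[] : forall j, a 0%N <= a j <= a j.+1 by rewrite /a !chebT0 subrr.
have y_ge1 : 1 <= y by apply: le_trans xy.
apply: (recurrence_nondecreasing (a := a)
  (e := fun j => 2 * (y - x) * (chebT j.+1).[x]) y_ge1).
- move=> j; have /andP[T_ge1 _] := chebT_ge1_leS j.+1 x_ge1.
  by apply: mulr_ge0; lra.
- by move=> j; rewrite /a !chebTSS; ring.
- by rewrite /a !chebT0 !chebT1; lra.
Qed.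

Lemma cheb_dd_diag_le X n : 1 <= X -> cheb_dd n X X <= n%:R ^+ 2 * (chebT n).[X].
Proof.
move=> X_ge1; rewrite -subr_ge0.
pose a k := k%:R ^+ 2 * (chebT k).[X] - cheb_dd k X X.
suff /(_ n)/andP[] : forall k, a 0%N <= a k <= a k.+1.
  by rewrite /a cheb_dd0 subr0 expr2 mulr0n !mul0r.
(* [e k] is a (k.+2) - 2 X a (k.+1) + a k, computed from [chebTSS] and [cheb_ddSS]. *)
apply: (recurrence_nondecreasing (a := a)
  (e := fun k => (2 * X - 2) * (2 * k%:R + 3) * (chebT k.+1).[X]
                 + (4 * k%:R + 4) * ((chebT k.+1).[X] - (chebT k).[X])) X_ge1).
- move=> k; have /andP[_ T_leS] := chebT_ge1_leS k X_ge1.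
  have /andP[TS_ge1 _] := chebT_ge1_leS k.+1 X_ge1.
  have k_ge0 : 0 <= k%:R :> R by [].
  by apply: addr_ge0; apply: mulr_ge0; try apply: mulr_ge0; lra.
- by move=> k; rewrite /a cheb_ddSS chebTSS !mulrSr; ring.
- by rewrite /a cheb_dd0 cheb_dd1 chebT0 chebT1 subr0 expr2 mulr0n !mul0r expr1n mul1r; lra.
Qed.

End ChebyshevGrowth.

Section ChebyshevReal.
Variable R : realType.
Implicit Types (X x t : R) (k : nat).

Lemma chebT_cos k t : (chebT k).[cos t] = cos (k%:R * t).
Proof.
elim/nat_ind2: k => [|| k IH0 IH1].
- by rewrite chebT0 mul0r cos0.
- by rewrite chebT1 mul1r.
- rewrite chebTSS IH0 IH1.
  have -> : k.+2%:R * t = k.+1%:R * t + t by rewrite !mulrSr; ring.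
  have -> : k%:R * t = k.+1%:R * t - t by rewrite !mulrSr; ring.
  by rewrite cosB cosD; ring.
Qed.

Lemma norm_chebT_le1 k x : -1 <= x <= 1 -> `|(chebT k).[x]| <= 1.
Proof. by move=> /acos_def[_ <-]; rewrite chebT_cos cos_max. Qed.

Lemma norm_chebT_le k x X : 1 <= X -> -1 <= x <= X -> `|(chebT k).[x]| <= (chebT k).[X].
Proof.
move=> X_ge1 /andP[x_geN1 x_leX]; have /andP[TX_ge1 _] := chebT_ge1_leS k X_ge1.
have [x_le1|x_gt1] := leP x 1.
  by apply: le_trans TX_ge1; apply: norm_chebT_le1; rewrite x_geN1.
have /andP[Tx_ge1 _] := chebT_ge1_leS k (ltW x_gt1).
by rewrite ger0_norm ?chebT_le ?(ltW x_gt1) //; lra.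
Qed.

Lemma norm_chebU_le k x X : 1 <= X -> -1 <= x <= X -> `|(chebU k).[x]| <= (chebU k).[X].
Proof.
move=> X_ge1 x_in; elim/nat_ind2: k => [|| k IH0 _].
- by rewrite !chebU0 normr1.
- by rewrite !chebU1 normrM ger0_norm ?ler_wpM2l // ler_norml; lra.
rewrite !chebUSS_chebT; apply: le_trans (ler_normD _ _) _; apply: lerD => //.
by rewrite normrM ger0_norm ?ler_wpM2l ?norm_chebT_le.
Qed.

Lemma chebT_unique (p : {poly R}) n :
  (forall t, p.[cos t] = cos (n%:R * t)) -> p = chebT n.
Proof.
move=> p_cos; apply: eq_poly_on_unit_interval => x /andP[x_ge0 x_le1].
have /acos_def[_ <-] : -1 <= x <= 1 by rewrite x_le1 andbT; lra.
by rewrite p_cos chebT_cos.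
Qed.

Lemma divdiff_chebT n d (lam : 'I_d -> R) i j :
  divdiff (chebT n) lam i j = cheb_dd n (lam i) (lam j).
Proof.
rewrite mxE; case: eqVneq => [<-|lam_neq] /=; first by rewrite deriv_chebT.
by rewrite -cheb_ddE mulrAC mulfV ?mul1r // subr_eq0.
Qed.

End ChebyshevReal.

Section Gamma2.
Variable R : realType.

Lemma gamma2_le_factor d k (M : 'M[R]_d) (v w : 'I_d -> 'rV[R]_k) B :
  (forall i j, M i j = \sum_(l < k) v i 0 l * w j 0 l) ->
  (forall i, sqnorm (v i) <= B) -> (forall j, sqnorm (w j) <= B) -> 0 <= B ->
  gamma2 M <= B.
Proof.
move=> Mvw vB wB B_ge0.
apply: (@le_trans _ _ (Num.max (\big[Num.max/0]_i sqnorm (v i))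
                                (\big[Num.max/0]_j sqnorm (w j)))).
  apply: ge_inf; last by exists k, v, w.
  by exists 0 => _ [k' [v' [w' [_ ->]]]]; rewrite le_max bigmax_ge_id.
by rewrite ge_max !bigmax_le.
Qed.

Lemma gamma2_le_sum d k (M : 'M[R]_d) (u t : 'I_k -> 'I_d -> R) (U T : 'I_k -> R) :
  (forall i j, M i j = \sum_l u l i * t l j) ->
  (forall l, 0 < U l) -> (forall l, 0 < T l) ->
  (forall l i, `|u l i| <= U l) -> (forall l j, `|t l j| <= T l) ->
  gamma2 M <= \sum_l U l * T l.
Proof.
move=> Mut U_gt0 T_gt0 uU tT.
pose s l := Num.sqrt (T l / U l).
have s_gt0 l : 0 < s l by rewrite sqrtr_gt0 divr_gt0.
have s2 l : s l ^+ 2 = T l / U l by rewrite sqr_sqrtr // ltW ?divr_gt0.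
apply: (@gamma2_le_factor _ _ _ (fun i => \row_l (s l * u l i)) (fun j => \row_l (t l j / s l))).
- move=> i j; rewrite Mut; apply: eq_bigr => l _; rewrite !mxE.
  by field; rewrite gt_eqF.
- move=> i; apply: ler_sum => l _; rewrite mxE exprMn s2.
  have -> : U l * T l = T l / U l * U l ^+ 2 by field; rewrite gt_eqF.
  by rewrite ler_wpM2l ?sqr_le_of_norm_le // ltW ?divr_gt0.
- move=> j; apply: ler_sum => l _; rewrite mxE expr_div_n s2.
  have -> : U l * T l = T l ^+ 2 / (T l / U l) by field; rewrite !gt_eqF.
  by rewrite ler_wpM2r ?sqr_le_of_norm_le // invr_ge0 ltW ?divr_gt0.
- by apply: sumr_ge0 => l _; rewrite mulr_ge0 // ltW.
Qed.

End Gamma2.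

Theorem lemma6 (R : realType) (n : nat) (Tn : {poly R})
  (hT : forall theta : R, Tn.[cos theta] = cos (n%:R * theta))
  (delta : R) (d : nat) (lam : 'I_d -> R) :
  (1 <= n)%N -> 0 <= delta -> delta < 1 ->
  (forall i, -1 <= lam i /\ lam i <= 1 + delta) ->
  gamma2 (divdiff Tn lam) <= (2 * n%:R ^+ 2 - 1) * Tn.[1 + delta].
Proof.
(* The bound n^2 T_n(1 + delta) proved below holds for every delta >= 0. *)
move=> n_gt0 delta_ge0 _ lam_bnd; rewrite (chebT_unique hT).
set X := 1 + delta; have X_ge1 : 1 <= X by rewrite lerDl.
have lam_in i : -1 <= lam i <= X by have [-> ->] := lam_bnd i.
have TX_ge1 k : 1 <= (chebT k).[X] by have /andP[] := chebT_ge1_leS k X_ge1.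
have cU_gt0 (k : 'I_n) : 0 < cheb_coef k * (chebU (n.-1 - k)).[X].
  by rewrite mulr_gt0 ?cheb_coef_gt0 // (lt_le_trans ltr01) ?chebU_ge1.
apply: le_trans (@gamma2_le_sum _ _ _ _
  (fun k i => cheb_coef k * (chebU (n.-1 - k)).[lam i]) (fun k j => (chebT k).[lam j])
  (fun k => cheb_coef k * (chebU (n.-1 - k)).[X]) (fun k => (chebT k).[X]) _ cU_gt0 _ _ _) _.
- by move=> i j; rewrite divdiff_chebT.
- by move=> k; apply: lt_le_trans (TX_ge1 k).
- move=> k i; have c_ge0 := ltW (cheb_coef_gt0 R k).
  by rewrite normrM ger0_norm // ler_wpM2l ?norm_chebU_le.
- by move=> k j; rewrite norm_chebT_le.
apply: le_trans (cheb_dd_diag_le n X_ge1) _.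
have n2_ge1 : 1 <= n%:R ^+ 2 :> R by rewrite -natrX ler1n expn_gt0 n_gt0.
by rewrite ler_wpM2r ?(le_trans ler01) //; lra.
Qed.
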